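(* Let $K$ be a field and $p\colon A\to B$ a morphism of cocommutative Hopf algebras over $K$. For a Hopf subalgebra $C\subseteq B$ let $p^{-1}(C)=\{x\in A \mid (p\otimes \mathrm{id}_A)\Delta(x)-1\otimes x\in C^+\otimes A\}$ (a Hopf subalgebra of $A$), and for a Hopf subalgebra $D\subseteq A$ let $p(D)$ denote its direct image. Then: (i) for all Hopf subalgebras $C$ of $B$, $p(p^{-1}(C))\subseteq C$; (ii) for all Hopf subalgebras $D$ of $A$, $D\subseteq p^{-1}(p(D))$; (iii) for all Hopf subalgebras $C\subseteq B$ and $D\subseteq A$, $D\subseteq p^{-1}(C)$ if and only if $p(D)\subseteq C$; (iv) for every Hopf subalgebra $C\subseteq B$, $C=p(p^{-1}(C))$ if and only if $C=p(D)$ for some Hopf subalgebra $D\subseteq A$.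
   Context: For a coalgebra $C$ with counit $\epsilon$, $C^+=\{x\in C\mid \epsilon(x)=0\}$. Morphisms of Hopf algebras are linear maps that are algebra and coalgebra morphisms. The set $p^{-1}(C)$ is called the h-inverse of $C$ along $p$. *)

From HB Require Import structures.
From mathcomp Require Import all_boot all_order all_algebra.
From mathcomp Require Import boolp classical_sets.
Set Implicit Arguments. Unset Strict Implicit. Unset Printing Implicit Defensive.
Import GRing.Theory.
Local Open Scope ring_scope.
Local Open Scope classical_set_scope.

(* Tensor products over a field K are modelled concretely: U (x) V is realised
   inside the space of functions {scalar U} -> {scalar V} -> K (bilinear forms on
   the product of the duals), u (x) v being  phi psi |-> phi u * psi v.  Over a field the
   canonical map U (x) V -> (dual U -> dual V -> K) is injective, so equalities of
   tensors and membership in subspaces P (x) Q are faithfully represented. *)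
Section Tensor.
Variable K : fieldType.

Definition tens (U V : lmodType K) := {scalar U} -> {scalar V} -> K.

Definition pure (U V : lmodType K) (u : U) (v : V) : tens U V :=
  fun phi psi => phi u * psi v.

Definition tsum (U V : lmodType K) (s : seq (U * V)) : tens U V :=
  fun phi psi => \sum_(x <- s) phi x.1 * psi x.2.

Definition tsub (U V : lmodType K) (t t' : tens U V) : tens U V :=
  fun phi psi => t phi psi - t' phi psi.

Definition in_tens (U V : lmodType K) (P : set U) (Q : set V) (t : tens U V) :=
  exists s : seq (U * V), (forall x, x \in s -> P x.1 /\ Q x.2) /\ t = tsum s.

Definition tmap (U V U' V' : lmodType K) (f : {linear U -> U'})
  (g : {linear V -> V'}) (t : tens U V) : tens U' V' :=
  fun phi psi => t (phi \o f) (psi \o g).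

End Tensor.

Section Hopf.
Variable K : fieldType.

Definition hopf_axioms (A : algType K) (D : A -> tens A A) (e : {scalar A})
    (S : {linear A -> A}) : Prop :=
  [/\
      ((forall x, in_tens setT setT (D x)) /\
       (forall (a : K) (x y : A), D (a *: x + y) = fun phi psi => a * D x phi psi + D y phi psi)),
      (* coassociativity: (D (x) id) D x = (id (x) D) D x, evaluated on phi (x) psi (x) chi *)
      (forall x s, D x = tsum s -> forall phi psi chi : {scalar A},
          \sum_(u <- s) D u.1 phi psi * chi u.2 = \sum_(u <- s) phi u.1 * D u.2 psi chi),
      (forall x s, D x = tsum s ->
          \sum_(u <- s) e u.1 *: u.2 = x /\ \sum_(u <- s) e u.2 *: u.1 = x),
      ((D 1 = pure 1 1 /\ forall x y s r, D x = tsum s -> D y = tsum r ->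
          D (x * y) = tsum [seq (u.1 * v.1, u.2 * v.2) | u <- s, v <- r]) /\
       (e 1 = 1 /\ forall x y, e (x * y) = e x * e y)) &
      (forall x s, D x = tsum s ->
          \sum_(u <- s) S u.1 * u.2 = e x *: 1 /\ \sum_(u <- s) u.1 * S u.2 = e x *: 1)].

Record hopf (A : algType K) := Hopf {
  hDelta : A -> tens A A;
  hEps : {scalar A};
  hS : {linear A -> A};
  hAx : hopf_axioms hDelta hEps hS }.

Definition cocommutative (A : algType K) (H : hopf A) : Prop :=
  forall x s, hDelta H x = tsum s -> hDelta H x = tsum [seq (u.2, u.1) | u <- s].

Definition hopf_morph (A B : algType K) (HA : hopf A) (HB : hopf B)
    (p : {linear A -> B}) : Prop :=
  [/\ p 1 = 1, (forall x y, p (x * y) = p x * p y),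
      (forall x, hEps HB (p x) = hEps HA x) &
      (forall x, hDelta HB (p x) = tmap p p (hDelta HA x))].

Definition hopf_sub (A : algType K) (H : hopf A) (D : set A) : Prop :=
  [/\ D 0 /\ (forall (a : K) x y, D x -> D y -> D (a *: x + y)),
      D 1 /\ (forall x y, D x -> D y -> D (x * y)),
      (forall x, D x -> in_tens D D (hDelta H x)) &
      (forall x, D x -> D (hS H x))].

Definition hplus (A : algType K) (H : hopf A) (C : set A) : set A :=
  [set c | C c /\ hEps H c = 0].

Definition hinv (A B : algType K) (HA : hopf A) (HB : hopf B)
    (p : {linear A -> B}) (C : set B) : set A :=
  [set x | in_tens (hplus HB C) setT
             (tsub (tmap p (@idfun A) (hDelta HA x)) (pure 1 x))].

End Hopf.

(* For a Hopf subalgebra C of B, x lies in p^{-1}(C) iff (p (x) id) Delta x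
   lies in C (x) A: applying eps (x) id to the latter gives 1 (x) x.  Applying id (x) eps
   then puts p x in C, which is (i); and Delta D <= D (x) D puts D inside p^{-1}(C) as soon
   as p(D) <= C, which gives (ii) and (iii).  Statement (iv) reduces to p^{-1}(C) being a
   Hopf subalgebra.  Products are handled by multiplicativity of Delta.  For Delta x,
   coassociativity puts its left slices in p^{-1}(C), cocommutativity its right slices,
   and (P (x) A) /\ (A (x) P) = P (x) P.  For S x, cocommutativity gives
   Delta o S = (S (x) S) o Delta, and p o S = S o p.
   Tensors are modelled as forms on pairs of scalars, so these identities are checked on
   scalars; this uses that scalars separate points (by Zorn's lemma) and that bilinear
   and trilinear forms factor through the model. *)

From HB Require Import structures.
From mathcomp Require Import all_boot all_order all_algebra.
From mathcomp Require Import boolp classical_sets.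
From mathcomp Require Import ring.
Import GRing.Theory.
Set Implicit Arguments. Unset Strict Implicit. Unset Printing Implicit Defensive.
Local Open Scope ring_scope.
Local Open Scope classical_set_scope.

Local Notation biscalar b := (bilinear_for *%R *%R b).

(** * Scalars separate points *)

Section Duality.
Variable K : fieldType.

Definition Scalar (U : lmodType K) (f : U -> K) (fP : scalar f) : {scalar U} :=
  HB.pack f (GRing.isLinear.Build K U K *%R f fP).

Lemma scalar0 (U : lmodType K) (f : U -> K) : scalar f -> f 0 = 0.
Proof. by move=> fS; exact: (linear0 (Scalar fS)). Qed.

Lemma scalarMl (U : lmodType K) (k : K) (f : {scalar U}) : scalar (fun x => k * f x).
Proof. by move=> a x y; rewrite linearP mulrDr mulrCA. Qed.

Lemma scalarMr (U : lmodType K) (k : K) (f : {scalar U}) : scalar (fun x => f x * k).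
Proof. by move=> a x y; rewrite linearP mulrDl mulrA. Qed.

Lemma scalar_sum (U : lmodType K) (I : Type) (r : seq I) (F : I -> U -> K) :
  (forall i, scalar (F i)) -> scalar (fun x => \sum_(i <- r) F i x).
Proof.
by move=> FS a x y; rewrite mulr_sumr -big_split; apply: eq_bigr => i _; exact: FS.
Qed.

Definition is_subspace (V : lmodType K) (M : set V) :=
  M 0 /\ forall a x y, M x -> M y -> M (a *: x + y).

Section Subspace.
Variables (V : lmodType K) (M : set V).
Hypothesis subM : is_subspace M.

Lemma subspace0 : M 0. Proof. by case: subM. Qed.

Lemma subspaceZ a x : M x -> M (a *: x).
Proof. by move=> Mx; have := subM.2 a x 0 Mx subspace0; rewrite addr0. Qed.

Lemma subspaceD x y : M x -> M y -> M (x + y).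
Proof. by move=> Mx My; have := subM.2 1 x y Mx My; rewrite scale1r. Qed.

Lemma subspaceB x y : M x -> M y -> M (x - y).
Proof. by move=> Mx My; rewrite -scaleN1r addrC; apply: subM.2. Qed.

Lemma subspace_sum (I : eqType) (r : seq I) (F : I -> V) :
  (forall i, i \in r -> M (F i)) -> M (\sum_(i <- r) F i).
Proof.
move=> MF; rewrite big_seq; apply: (big_ind M) => //.
  exact: subspace0.
exact: subspaceD.
Qed.

End Subspace.

Section Separation.
Variable V : lmodType K.

Lemma maximal_subspace_avoiding (S : set V) (v : V) : is_subspace S -> ~ S v ->
  exists M : set V, [/\ is_subspace M, S `<=` M, ~ M v &
    forall N, is_subspace N -> M `<` N -> N v].
Proof.
move=> subS nSv.
pose closed (M : set V) := forall a x y, M x -> M y -> M (a *: x + y).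
(* The disjunct [M = set0] only serves to let the empty chain satisfy [P]. *)
pose P M := [/\ closed M, ~ M v & M = set0 \/ S `<=` M].
have [M [[clM nMv SM'] maxM]] : exists M, P M /\ forall N, M `<` N -> ~ P N.
  apply: Zorn_bigcup => F FP Ftot; split.
  - move=> a x y [X FX Xx] [Y FY Yy].
    have [[clX _ _] [clY _ _]] := (FP X FX, FP Y FY).
    have [XY|YX] := Ftot X Y FX FY.
      by exists Y => //; apply: clY => //; exact: XY.
    by exists X => //; apply: clX => //; exact: YX.
  - by move=> [X FX]; have [_ + _] := FP X FX.
  - have [[X [FX SX]]|noS] := pselect (exists X, F X /\ S `<=` X).
      by right => s Ss; exists X => //; exact: SX.
    left; apply/seteqP; split => // x [X FX Xx].
    have [_ _ [X0|SX]] := FP X FX; first by rewrite X0 in Xx.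
    by case: noS; exists X.
have SM : S `<=` M.
  case: SM' => // M0; case: (maxM S); last by split => //; [exact: subS.2 | right].
  split; first by rewrite M0.
  by move=> /(_ 0 subS.1); rewrite M0.
exists M; split => //; first by split; [exact: SM subS.1 | exact: clM].
move=> N [_ clN] [MN NM]; apply: contrapT => nNv; apply: (maxM N) => //.
by split => //; right => s /SM /MN.
Qed.

Lemma hyperplane_avoiding (S : set V) (v : V) : is_subspace S -> ~ S v ->
  exists M : set V, [/\ is_subspace M, S `<=` M, ~ M v &
    forall w, exists a, exists2 m, M m & w = m + a *: v].
Proof.
move=> subS nSv; have [M [subM SM nMv maxM]] := maximal_subspace_avoiding subS nSv.
exists M; split => // w.
have [Mw|nMw] := pselect (M w); first by exists 0, w; rewrite ?scale0r ?addr0.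
pose N z := exists m mu, M m /\ z = m + mu *: w.
have [m [mu [Mm vE]]] : N v.
  apply: maxM; split.
  - by exists 0, 0; split; [exact: subspace0 | rewrite scale0r addr0].
  - move=> a x y [m [mu [Mm ->]]] [m' [mu' [Mm' ->]]].
    exists (a *: m + m'), (a * mu + mu'); split; first exact: subM.2.
    by rewrite scalerDr scalerDl scalerA addrACA.
  - by move=> m Mm; exists m, 0; rewrite scale0r addr0.
  - move=> NM; apply: nMw; apply: NM; exists 0, 1; split; first exact: subspace0.
    by rewrite scale1r add0r.
have mu0 : mu != 0 by apply: contra_notN nMv => /eqP mu0; rewrite vE mu0 scale0r addr0.
exists mu^-1, ((- mu^-1) *: m); first exact: subspaceZ.
by rewrite vE scalerDr scalerA mulVf // scale1r scaleNr addKr.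
Qed.

Lemma scalar_separation (S : set V) (v : V) : is_subspace S -> ~ S v ->
  exists phi : {scalar V}, phi v = 1 /\ forall s, S s -> phi s = 0.
Proof.
move=> subS nSv; have [M [subM SM nMv decomp]] := hyperplane_avoiding subS nSv.
have coef_uniq m m' a b : M m -> M m' -> m + a *: v = m' + b *: v -> a = b.
  move=> Mm Mm' E; apply: contrapT => /eqP; rewrite -subr_eq0 => ab; apply: nMv.
  have Ediff : (a - b) *: v = m' - m.
    by rewrite scalerBl; apply/eqP; rewrite subr_eq addrAC -E addrAC subrr add0r.
  have -> : v = (a - b)^-1 *: (m' - m) by rewrite -Ediff scalerA mulVf ?scale1r.
  exact/(subspaceZ subM)/(subspaceB subM).
pose f w := projT1 (cid (decomp w)).
have fP w : exists2 m, M m & w = m + f w *: v := projT2 (cid (decomp w)).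
have fS : scalar f.
  move=> a x y; have [m Mm E] := fP (a *: x + y).
  have [mx Mmx Ex] := fP x; have [my Mmy Ey] := fP y.
  apply/esym/(coef_uniq (a *: mx + my) m) => //; first exact: subM.2.
  by rewrite -E [in RHS]Ex [in RHS]Ey scalerDr scalerDl scalerA addrACA.
exists (Scalar fS); split => [|s Ss] /=.
  have [m Mm E] := fP v; apply: (coef_uniq m 0) => //; first exact: subspace0.
  by rewrite -E add0r scale1r.
have [m Mm E] := fP s; apply: (coef_uniq m s) => //; first exact: SM.
by rewrite -E scale0r addr0.
Qed.

Lemma eq_by_scalars (u v : V) : (forall phi : {scalar V}, phi u = phi v) -> u = v.
Proof.
move=> uv; apply/eqP; rewrite -subr_eq0; apply/eqP; apply: contrapT => nz.
have subS : is_subspace [set 0 : V] by split => // a x y -> ->; rewrite scaler0 addr0.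
have [phi [phi1 _]] := scalar_separation subS nz.
by move: phi1; rewrite linearB /= uv subrr => /eqP; rewrite eq_sym oner_eq0.
Qed.

End Separation.

Section Span.
Variable V : lmodType K.

Fixpoint span_seq (ws : seq V) : set V :=
  if ws is w :: ws' then [set z | exists a, exists2 y, span_seq ws' y & z = a *: w + y]
  else [set 0].

Lemma span_seq_subspace ws : is_subspace (span_seq ws).
Proof.
elim: ws => [|w ws [sp0 spcl]] /=; first by split => // a x y -> ->; rewrite scaler0 addr0.
split; first by exists 0, 0; rewrite ?scale0r ?addr0.
move=> a x y [b [x' spx' ->]] [c [y' spy' ->]].
exists (a * b + c), (a *: x' + y'); first exact: spcl.
by rewrite scalerDr scalerA addrACA scalerDl.
Qed.

Lemma span_seq_mem ws w : w \in ws -> span_seq ws w.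
Proof.
elim: ws => [|w' ws IH] //=; rewrite inE => /orP[/eqP ->|/IH Hw].
  by exists 1, 0; [exact: subspace0 (span_seq_subspace ws) | rewrite scale1r addr0].
by exists 0, w; rewrite ?scale0r ?add0r.
Qed.

End Span.

End Duality.

(** * Tensors as forms on pairs of scalars *)

Section Tensors.
Variable K : fieldType.

Lemma sum_eq0_on_image (I : Type) (V : eqType) (W : zmodType) (g : I -> V) (F : I -> W)
    (t : seq I) :
  (forall i, g i \in map g t -> F i = 0) -> \sum_(i <- t) F i = 0.
Proof.
elim: t => [|i t IH] F0; first by rewrite big_nil.
rewrite big_cons F0 ?mem_head // IH ?add0r // => j jt.
by apply: F0; rewrite inE jt orbT.
Qed.

Section SeparatedSums.
Variables (X : Type) (V : lmodType K) (comb : X -> K -> X -> X).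

(* [X] stands for a space of left tensor factors that is only known through
   [comb x l y], which plays the role of [x + l y]. *)
Definition comb_biscalar (G : X -> V -> K) :=
  (forall x l y c, G (comb x l y) c = G x c + l * G y c) /\ forall x, scalar (G x).

(* If [c0 = \sum_i a_i c_i], then [x0 (x) c0 = \sum_i (a_i x0) (x) c_i] is absorbed into [t]. *)
Lemma sum_absorb_span (x0 : X) (c0 : V) (t : seq (X * V)) : span_seq (map snd t) c0 ->
  exists2 t' : seq (X * V), size t' = size t & forall G, comb_biscalar G ->
    \sum_(z <- t') G z.1 z.2 = \sum_(z <- t) G z.1 z.2 + G x0 c0.
Proof.
elim: t c0 => [|[x1 c1] t IH] c0 /=.
  move=> ->; exists [::] => // G [_ GS].
  by rewrite big_nil scalar0 ?addr0.
move=> [a [y /IH [t' st' Ht'] ->]]; exists ((comb x1 a x0, c1) :: t') => /=; first by rewrite st'.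
move=> G [Gcomb GS]; rewrite !big_cons /= Ht' //.
by rewrite Gcomb (GS x0) -!addrA; congr (_ + _); rewrite addrCA.
Qed.

Variables (J : Type) (Phi : J -> X -> K) (beta : X -> V -> K).
Hypotheses (Phi_comb : forall j x l y, Phi j (comb x l y) = Phi j x + l * Phi j y)
  (beta_biscalar : comb_biscalar beta)
  (beta_sep : forall x, (forall j, Phi j x = 0) -> forall c, beta x c = 0).

(* Reduce to linearly independent right factors; a right factor outside the span of
   the others is detected by a scalar, which forces all [Phi j] to vanish on its left factor. *)
Lemma separated_sum_eq0 (t : seq (X * V)) :
  (forall j (chi : {scalar V}), \sum_(z <- t) Phi j z.1 * chi z.2 = 0) ->
  \sum_(z <- t) beta z.1 z.2 = 0.
Proof.
elim: {t}(size t) {-2}t (leqnn (size t)) => [|n IH] [|[x0 c0] t] //=; rewrite ?big_nil //.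
move=> st vanish; have [c0_span|c0_free] := pselect (span_seq (map snd t) c0).
  have [t' st' Ht'] := sum_absorb_span x0 c0_span.
  have Phi_biscalar j (chi : {scalar V}) : comb_biscalar (fun x c => Phi j x * chi c).
    split => [x l y c|x a c c']; first by rewrite Phi_comb mulrDl mulrA.
    by rewrite linearP mulrDr mulrCA.
  rewrite big_cons addrC -(Ht' _ beta_biscalar); apply: IH; first by rewrite st'.
  move=> j chi; rewrite (Ht' _ (Phi_biscalar j chi)) addrC.
  by have := vanish j chi; rewrite big_cons.
have [chi0 [chi0c0 chi0t]] := scalar_separation (span_seq_subspace _) c0_free.
have Phi_x0 j : Phi j x0 = 0.
  have t0 : \sum_(z <- t) Phi j z.1 * chi0 z.2 = 0.
    by apply: (sum_eq0_on_image (g := snd)) => z /span_seq_mem /chi0t ->; rewrite mulr0.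
  by have := vanish j chi0; rewrite big_cons chi0c0 mulr1 t0 addr0.
rewrite big_cons beta_sep // add0r; apply: IH => // j chi.
by have := vanish j chi; rewrite big_cons Phi_x0 mul0r add0r.
Qed.

End SeparatedSums.

Section TensorForms.
Variables U V : lmodType K.

Definition tform (b : U -> V -> K) (s : seq (U * V)) := \sum_(z <- s) b z.1 z.2.

Lemma biscalar_mul (f : {scalar U}) (g : {scalar V}) : biscalar (fun a c => f a * g c).
Proof.
by split=> [c|a] k x y /=; rewrite linearP; [rewrite mulrDl mulrA | rewrite mulrDr mulrCA].
Qed.

Lemma biscalar_mulC (f : {scalar U}) (g : {scalar V}) : biscalar (fun a c => g c * f a).
Proof.
by split=> [c|a] k x y /=; rewrite linearP; [rewrite mulrDr mulrCA | rewrite mulrDl mulrA].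
Qed.

Lemma biscalar_sum (I : Type) (r : seq I) (b : I -> U -> V -> K) :
  (forall i, biscalar (b i)) -> biscalar (fun x y => \sum_(i <- r) b i x y).
Proof.
move=> bb; split=> [c|a] k x y /=; rewrite mulr_sumr -big_split; apply: eq_bigr => i _.
  exact: (bb i).1.
exact: (bb i).2.
Qed.

Lemma tform_tsum (b : U -> V -> K) s s' : biscalar b -> tsum s = tsum s' ->
  tform b s = tform b s'.
Proof.
move=> [bl br] E; apply/eqP; rewrite -subr_eq0; apply/eqP.
have bN x c : b (- x) c = - b x c by exact: (linearN (Scalar (bl c))).
have key : \sum_(z <- s ++ [seq (- z.1, z.2) | z <- s']) b z.1 z.2 = 0.
  apply: (@separated_sum_eq0 U V (fun x l y => x + l *: y) {scalar U} (fun phi x => phi x)).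
  - by move=> phi x l y; rewrite linearD linearZ.
  - by split=> [x l y c|x]; [rewrite addrC (bl c) addrC | exact: br].
  - move=> x x0 c; rewrite (@eq_by_scalars _ _ x 0) ?(scalar0 (bl c)) // => phi.
    by rewrite x0 linear0.
  move=> phi chi; rewrite big_cat big_map /=; apply/eqP; rewrite addr_eq0; apply/eqP.
  rewrite -sumrN; under [RHS]eq_bigr do rewrite linearN mulNr opprK.
  exact: (congr1 (fun t => t phi chi) E).
by move: key; rewrite big_cat big_map /=; under [X in _ + X]eq_bigr do rewrite bN; rewrite sumrN.
Qed.

Definition lslice (s : seq (U * V)) (chi : {scalar V}) : U := \sum_(u <- s) chi u.2 *: u.1.
Definition rslice (s : seq (U * V)) (phi : {scalar U}) : V := \sum_(u <- s) phi u.1 *: u.2.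

Lemma lsliceE (phi : {scalar U}) s chi : phi (lslice s chi) = tsum s phi chi.
Proof. by rewrite linear_sum; apply: eq_bigr => u _; rewrite linearZ mulrC. Qed.

Lemma rsliceE (psi : {scalar V}) s phi : psi (rslice s phi) = tsum s phi psi.
Proof. by rewrite linear_sum; apply: eq_bigr => u _; rewrite linearZ. Qed.

Lemma lslice_tsum s s' chi : tsum s = tsum s' -> lslice s chi = lslice s' chi.
Proof. by move=> E; apply: eq_by_scalars => phi; rewrite !lsliceE E. Qed.

Lemma rslice_tsum s s' phi : tsum s = tsum s' -> rslice s phi = rslice s' phi.
Proof. by move=> E; apply: eq_by_scalars => psi; rewrite !rsliceE E. Qed.

Lemma lslice_cons_free (a : U) (b : V) t : ~ span_seq (map snd t) b ->
  exists chi, lslice ((a, b) :: t) chi = a.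
Proof.
move=> b_free; have [chi [chib chit]] := scalar_separation (span_seq_subspace _) b_free.
exists chi; rewrite /lslice big_cons /= chib scale1r (sum_eq0_on_image (g := snd)) ?addr0 //.
by move=> z /span_seq_mem /chit ->; rewrite scale0r.
Qed.

Lemma rslice_cons_free (a : U) (b : V) t : ~ span_seq (map fst t) a ->
  exists phi, rslice ((a, b) :: t) phi = b.
Proof.
move=> a_free; have [phi [phia phit]] := scalar_separation (span_seq_subspace _) a_free.
exists phi; rewrite /rslice big_cons /= phia scale1r (sum_eq0_on_image (g := fst)) ?addr0 //.
by move=> z /span_seq_mem /phit ->; rewrite scale0r.
Qed.

Lemma tsum_absorb_snd (a : U) (b : V) t : span_seq (map snd t) b ->
  exists2 t', size t' = size t & tsum t' = tsum ((a, b) :: t).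
Proof.
move=> /(sum_absorb_span (fun x l y => x + l *: y) a) [t' st' Ht']; exists t' => //.
apply: funext => phi; apply: funext => psi.
rewrite /tsum big_cons addrC (Ht' (fun x c => phi x * psi c)) //.
by split=> [x l y c|x]; [rewrite linearD linearZ mulrDl mulrA | exact: (biscalar_mul phi psi).2].
Qed.

End TensorForms.

Lemma tsum_swap (U V : lmodType K) (s : seq (U * V)) phi psi :
  tsum [seq (u.2, u.1) | u <- s] psi phi = tsum s phi psi.
Proof. by rewrite /tsum big_map; apply: eq_bigr => u _; rewrite mulrC. Qed.

Lemma tsum_absorb_fst (U V : lmodType K) (a : U) (b : V) t : span_seq (map fst t) a ->
  exists2 t', size t' = size t & tsum t' = tsum ((a, b) :: t).
Proof.
move=> a_span; have /(tsum_absorb_snd b) [t' st' Ht'] :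
  span_seq (map snd [seq (u.2, u.1) | u <- t]) a by rewrite -map_comp.
exists [seq (u.2, u.1) | u <- t'].
  by rewrite size_map st' size_map.
apply: funext => phi; apply: funext => psi; rewrite -tsum_swap mapK ?Ht'; last by case.
by rewrite -[RHS]tsum_swap.
Qed.

(* [(P (x) V) /\ (U (x) Q) = P (x) Q], read off a representing sequence. *)
Lemma in_tens_of_slices (U V : lmodType K) (P : set U) (Q : set V) (s : seq (U * V)) :
  is_subspace P -> is_subspace Q ->
  (forall chi, P (lslice s chi)) -> (forall phi, Q (rslice s phi)) -> in_tens P Q (tsum s).
Proof.
move=> subP subQ; elim: {s}(size s) {-2}s (leqnn (size s)) => [|n IH] [|[a b] t] //=;
  try by exists [::].
move=> st Ps Qs.
have absorbed t' : size t' = size t -> tsum t' = tsum ((a, b) :: t) -> in_tens P Q (tsum t').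
  move=> st' Et'; apply: IH; first by rewrite st'.
  - by move=> chi; rewrite (lslice_tsum _ Et').
  - by move=> phi; rewrite (rslice_tsum _ Et').
have [/(tsum_absorb_snd a) [t' st' Et']|b_free] := pselect (span_seq (map snd t) b).
  by rewrite -Et'; exact: absorbed.
have [/(tsum_absorb_fst b) [t' st' Et']|a_free] := pselect (span_seq (map fst t) a).
  by rewrite -Et'; exact: absorbed.
have Pa : P a by have [chi <-] := lslice_cons_free a b_free; exact: Ps.
have Qb : Q b by have [phi <-] := rslice_cons_free b a_free; exact: Qs.
have [s' [s'PQ Es']] : in_tens P Q (tsum t).
  apply: IH => //.
  by move=> chi; have := subspaceB subP (Ps chi) (subspaceZ subP (chi b) Pa);
    rewrite /lslice big_cons addrC addKr.
  by move=> phi; have := subspaceB subQ (Qs phi) (subspaceZ subQ (phi a) Qb);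
    rewrite /rslice big_cons addrC addKr.
exists ((a, b) :: s'); split; first by move=> z; rewrite inE => /orP[/eqP -> //|/s'PQ].
apply: funext => phi; apply: funext => psi.
by rewrite /tsum !big_cons -/(tsum _ phi psi) Es'.
Qed.

Lemma tmap_tsum (U V U' V' : lmodType K) (f : {linear U -> U'}) (g : {linear V -> V'}) s :
  tmap f g (tsum s) = tsum [seq (f u.1, g u.2) | u <- s].
Proof. by apply: funext => phi; apply: funext => psi; rewrite /tmap /tsum big_map. Qed.

Definition tmul (A B : algType K) (s : seq (A * B)) (r : seq (A * B)) :=
  [seq (u.1 * v.1, u.2 * v.2) | u <- s, v <- r].

Lemma tsum_tmul (A B : algType K) (s s' r r' : seq (A * B)) :
  tsum s = tsum s' -> tsum r = tsum r' -> tsum (tmul s r) = tsum (tmul s' r').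
Proof.
move=> Es Er; apply: funext => phi; apply: funext => psi; rewrite /tsum !big_allpairs_dep /=.
transitivity (\sum_(v <- r) tsum s (phi \o (v.1 \o* idfun)) (psi \o (v.2 \o* idfun))).
  by rewrite exchange_big.
transitivity (\sum_(v <- r) tsum s' (phi \o (v.1 \o* idfun)) (psi \o (v.2 \o* idfun))).
  by apply: eq_bigr => v _; rewrite Es.
rewrite /tsum exchange_big /=.
transitivity (\sum_(u <- s') tsum r (phi \o (u.1 \*o idfun)) (psi \o (u.2 \*o idfun))) => //.
by apply: eq_bigr => u _; rewrite Er.
Qed.

End Tensors.

(** * Hopf algebra calculus *)

Section HopfCalculus.
Variables (K : fieldType) (A : algType K) (H : hopf A).
Local Notation Delta := (hDelta H).
Local Notation eps := (hEps H).
Local Notation S := (hS H).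

Lemma Delta_tsum x : exists s, Delta x = tsum s.
Proof. by have [[DA _] _ _ _ _] := hAx H; have [s [_ ->]] := DA x; exists s. Qed.

Definition sweedler x : seq (A * A) := projT1 (cid (Delta_tsum x)).

Lemma sweedlerP x : Delta x = tsum (sweedler x).
Proof. exact: projT2 (cid (Delta_tsum x)). Qed.

Lemma Delta_scalar phi psi : scalar (fun x => Delta x phi psi).
Proof. by have [[_ DP] _ _ _ _] := hAx H; move=> a x y; rewrite DP. Qed.

Lemma Delta_sum (I : Type) (r : seq I) (F : I -> A) phi psi :
  Delta (\sum_(i <- r) F i) phi psi = \sum_(i <- r) Delta (F i) phi psi.
Proof. exact: (linear_sum (Scalar (Delta_scalar phi psi))). Qed.

Lemma DeltaZ a x phi psi : Delta (a *: x) phi psi = a * Delta x phi psi.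
Proof. exact: (scalarZ (Scalar (Delta_scalar phi psi))). Qed.

Lemma coassoc x s : Delta x = tsum s -> forall phi psi chi : {scalar A},
  \sum_(u <- s) Delta u.1 phi psi * chi u.2 = \sum_(u <- s) phi u.1 * Delta u.2 psi chi.
Proof. by have [_ co _ _ _] := hAx H; exact: co. Qed.

Lemma counit_l x s : Delta x = tsum s -> \sum_(u <- s) eps u.1 *: u.2 = x.
Proof. by have [_ _ cu _ _] := hAx H; move=> /cu []. Qed.

Lemma counit_r x s : Delta x = tsum s -> \sum_(u <- s) eps u.2 *: u.1 = x.
Proof. by have [_ _ cu _ _] := hAx H; move=> /cu []. Qed.

Lemma Delta1 : Delta 1 = tsum [:: (1, 1)].
Proof.
have [_ _ _ [[-> _] _] _] := hAx H.
by apply: funext => phi; apply: funext => psi; rewrite /tsum big_seq1.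
Qed.

Lemma Delta_mul x y s r : Delta x = tsum s -> Delta y = tsum r ->
  Delta (x * y) = tsum (tmul s r).
Proof. by have [_ _ _ [[_ DM] _] _] := hAx H; exact: DM. Qed.

Lemma eps1 : eps 1 = 1.
Proof. by have [_ _ _ [_ []]] := hAx H. Qed.

Lemma antipode_l x s : Delta x = tsum s -> \sum_(u <- s) S u.1 * u.2 = eps x *: 1.
Proof. by have [_ _ _ _ an] := hAx H; move=> /an []. Qed.

Lemma antipode_r x s : Delta x = tsum s -> \sum_(u <- s) u.1 * S u.2 = eps x *: 1.
Proof. by have [_ _ _ _ an] := hAx H; move=> /an []. Qed.

Definition Dform (b : A -> A -> K) x := tform b (sweedler x).

Lemma DformE b x s : biscalar b -> Delta x = tsum s -> Dform b x = tform b s.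
Proof. by move=> bb E; apply: tform_tsum; rewrite -?sweedlerP. Qed.

Lemma Dform_scalar b : biscalar b -> scalar (Dform b).
Proof.
move=> bb a x y.
rewrite (@DformE b _ ([seq (a *: u.1, u.2) | u <- sweedler x] ++ sweedler y)) //.
  rewrite /tform big_cat big_map mulr_sumr; congr (_ + _).
  by apply: eq_bigr => u _; exact: (scalarZ (Scalar (bb.1 u.2))).
apply: funext => phi; apply: funext => psi; rewrite Delta_scalar !sweedlerP.
rewrite /tsum big_cat big_map mulr_sumr; congr (_ + _).
by apply: eq_bigr => u _; rewrite linearZ mulrA.
Qed.

Lemma Dform_sum b (I : Type) (r : seq I) (k : I -> K) (y : I -> A) : biscalar b ->
  Dform b (\sum_(i <- r) k i *: y i) = \sum_(i <- r) k i * Dform b (y i).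
Proof.
move=> bb; pose L := Scalar (Dform_scalar bb); rewrite -[Dform b _]/(L _) linear_sum.
by apply: eq_bigr => i _; rewrite scalarZ.
Qed.

Definition triscalar (tau : A -> A -> A -> K) :=
  (forall c, biscalar (fun a b => tau a b c)) /\ forall a b, scalar (tau a b).

(* Coassociativity is an axiom about [phi (x) psi (x) chi] only; it extends to all
   trilinear forms because these are separated by such products. *)
Lemma coassoc_triscalar tau x s : triscalar tau -> Delta x = tsum s ->
  \sum_(u <- s) Dform (fun a b => tau a b u.2) u.1 = \sum_(u <- s) Dform (tau u.1) u.2.
Proof.
move=> [tau12 tau3] Ex; apply/eqP; rewrite -subr_eq0; apply/eqP.
have tauN a b c : tau (- a) b c = - tau a b c by exact: (linearN (Scalar ((tau12 c).1 b))).
pose comb (l : seq (A * A)) k l' := l ++ [seq (k *: z.1, z.2) | z <- l'].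
have key : \sum_(z <- [seq (sweedler u.1, u.2) | u <- s] ++
                   [seq ([:: (- u.1, w.1)], w.2) | u <- s, w <- sweedler u.2])
             tform (fun a b => tau a b z.2) z.1 = 0.
  apply: (@separated_sum_eq0 _ (seq (A * A)) A comb ({scalar A} * {scalar A})
    (fun j l => tsum l j.1 j.2) (fun l c => tform (fun a b => tau a b c) l)).
  - move=> j l k l'; rewrite /tsum big_cat big_map mulr_sumr; congr (_ + _).
    by apply: eq_bigr => z _; rewrite linearZ mulrA.
  - split=> [l k l' c|l].
      rewrite /tform big_cat big_map mulr_sumr; congr (_ + _).
      by apply: eq_bigr => z _; exact: (scalarZ (Scalar ((tau12 c).1 z.2))).
    by move=> k c c'; rewrite /tform mulr_sumr -big_split; apply: eq_bigr => z _; rewrite tau3.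
  - move=> l l0 c; rewrite (@tform_tsum _ _ _ _ l [::]) //; first by rewrite /tform big_nil.
    apply: funext => phi; apply: funext => psi.
    by rewrite [RHS]/tsum big_nil; exact: (l0 (phi, psi)).
  move=> [phi psi] chi /=; rewrite big_cat big_map big_allpairs_dep /=.
  under [X in _ + X]eq_bigr do under eq_bigr do rewrite /tsum big_seq1 /= linearN !mulNr.
  rewrite (eq_bigr (fun u => Delta u.1 phi psi * chi u.2)) => [|u _]; last by rewrite sweedlerP.
  rewrite (coassoc Ex) -big_split big1 //= => u _; rewrite sweedlerP /tsum mulr_sumr -big_split.
  by rewrite big1 // => w _ /=; rewrite mulrA subrr.
move: key; rewrite big_cat big_map big_allpairs_dep /=.
under [X in _ + X]eq_bigr do under eq_bigr do rewrite /tform big_seq1 /= tauN.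
by under [X in _ + X]eq_bigr do rewrite sumrN; rewrite sumrN.
Qed.

(* [(Delta * ((S (x) S) o swap o Delta)) y = eps y (1 (x) 1)] in the convolution algebra,
   paired with [psi (x) phi]. *)
Lemma Delta_conv_swapS y (phi psi : {scalar A}) :
  \sum_(u <- sweedler y) Dform (fun w1 w2 =>
      Dform (fun z1 z2 => psi (w2 * S z1) * phi (w1 * S z2)) u.2) u.1 =
  eps y * (psi 1 * phi 1).
Proof.
pose tau a b c := Dform (fun z1 z2 => psi (b * S z1) * phi (a * S z2)) c.
have tauT : triscalar tau.
  split=> [c|a b]; last first.
    apply: Dform_scalar.
    exact: biscalar_mul (psi \o (b \*o idfun) \o S) (phi \o (a \*o idfun) \o S).
  rewrite /tau /Dform /tform.
  exact: biscalar_sum (fun z => biscalar_mulC (phi \o (S z.2 \o* idfun))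
                                              (psi \o (S z.1 \o* idfun))).
rewrite (coassoc_triscalar tauT (sweedlerP y)).
transitivity (\sum_(u <- sweedler y) psi 1 * phi (u.1 * S u.2)); last first.
  by rewrite -mulr_sumr -linear_sum (antipode_r (sweedlerP y)) linearZ /= mulrCA.
apply: eq_bigr => u _.
pose tau2 a b c := psi (a * S b) * phi (u.1 * S c).
have tau2T : triscalar tau2.
  split=> [c|a b]; last exact: scalarMl (phi \o (u.1 \*o idfun) \o S).
  split=> [b|a]; first exact: scalarMr (psi \o (S b \o* idfun)).
  exact: scalarMr (psi \o (a \*o idfun) \o S).
rewrite -[LHS]/(\sum_(v <- sweedler u.2) Dform (tau2 v.1) v.2).
rewrite -(coassoc_triscalar tau2T (sweedlerP u.2)).
transitivity (\sum_(v <- sweedler u.2) eps v.1 * (psi 1 * phi (u.1 * S v.2))).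
  apply: eq_bigr => v _; rewrite /Dform /tform /tau2 -mulr_suml -linear_sum.
  by rewrite (antipode_r (sweedlerP v.1)) linearZ /= mulrA.
rewrite -[in RHS](counit_l (sweedlerP u.2)) linear_sum mulr_sumr linear_sum mulr_sumr.
by apply: eq_bigr => v _; rewrite linearZ -scalerAr linearZ /= mulrCA.
Qed.

(* [triple_conv phi psi a b c] pairs [Delta (S a) * Delta b * (S (x) S) (swap (Delta c))]
   with [phi (x) psi]. *)
Definition triple_conv (phi psi : {scalar A}) a b c :=
  Dform (fun z1 z2 => Dform (fun al1 al2 => Dform (fun w1 w2 =>
    psi (al2 * (w2 * S z1)) * phi (al1 * (w1 * S z2))) b) (S a)) c.

Lemma triple_conv_triscalar phi psi : triscalar (triple_conv phi psi).
Proof.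
split=> [c|a b]; last first.
  apply: Dform_scalar; apply: biscalar_sum => al; apply: biscalar_sum => w.
  exact: biscalar_mul (psi \o (al.2 \*o idfun) \o (w.2 \*o idfun) \o S)
                      (phi \o (al.1 \*o idfun) \o (w.1 \*o idfun) \o S).
split=> [b|a]; apply: scalar_sum => z.
  have GS : biscalar (fun al1 al2 => Dform (fun w1 w2 =>
      psi (al2 * (w2 * S z.1)) * phi (al1 * (w1 * S z.2))) b).
    apply: biscalar_sum => w.
    exact: biscalar_mulC (phi \o ((w.1 * S z.2) \o* idfun)) (psi \o ((w.2 * S z.1) \o* idfun)).
  exact: linearP (Scalar (Dform_scalar GS) \o S).
apply: scalar_sum => al; apply: Dform_scalar.
exact: biscalar_mulC (phi \o (al.1 \*o idfun) \o (S z.2 \o* idfun))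
                     (psi \o (al.2 \*o idfun) \o (S z.1 \o* idfun)).
Qed.

(* [Delta o S] is a left and [(S (x) S) o swap o Delta] a right convolution inverse of
   [Delta]; associativity of the triple convolution is [coassoc_triscalar]. *)
Lemma Delta_antipode x (phi psi : {scalar A}) :
  Delta (S x) phi psi = \sum_(u <- sweedler x) phi (S u.2) * psi (S u.1).
Proof.
transitivity (\sum_(u <- sweedler x) Dform (triple_conv phi psi u.1) u.2).
  rewrite -{1}(counit_r (sweedlerP x)) linear_sum Delta_sum; apply: eq_bigr => u _.
  rewrite linearZ DeltaZ sweedlerP /tsum mulr_sumr.
  transitivity (\sum_(al <- sweedler (S u.1)) \sum_(v <- sweedler u.2) Dform (fun w1 w2 =>
      Dform (fun z1 z2 => psi (al.2 * (w2 * S z1)) * phi (al.1 * (w1 * S z2))) v.2) v.1).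
    apply: eq_bigr => al _; symmetry.
    have := Delta_conv_swapS u.2 (phi \o (al.1 \*o idfun)) (psi \o (al.2 \*o idfun)).
    by rewrite /= !mulr1 => ->; rewrite [psi _ * _]mulrC.
  rewrite exchange_big; apply: eq_bigr => v _; rewrite /triple_conv /Dform /tform.
  by under eq_bigr do rewrite exchange_big; exact: exchange_big.
rewrite -(coassoc_triscalar (triple_conv_triscalar phi psi) (sweedlerP x)).
pose g a b := phi (S b) * psi (S a).
have gS : biscalar g by exact: biscalar_mulC (psi \o S) (phi \o S).
rewrite -[RHS]/(Dform g x) -[in RHS](counit_l (sweedlerP x)) Dform_sum //.
apply: eq_bigr => u _; rewrite /triple_conv /Dform /tform exchange_big mulr_sumr.
apply: eq_bigr => z _.
transitivity (\sum_(v <- sweedler u.1)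
    Delta (S v.1 * v.2) (phi \o (S z.2 \o* idfun)) (psi \o (S z.1 \o* idfun))).
  apply: eq_bigr => v _; rewrite (Delta_mul (sweedlerP _) (sweedlerP _)) /tsum big_allpairs_dep /=.
  by apply: eq_bigr => al _; apply: eq_bigr => w _; rewrite !mulrA [LHS]mulrC.
rewrite -Delta_sum (antipode_l (sweedlerP u.1)) DeltaZ Delta1 /tsum big_seq1 /=.
by rewrite !mul1r.
Qed.

Lemma Delta_antipode_cocomm x s : cocommutative H -> Delta x = tsum s ->
  Delta (S x) = tsum [seq (S u.1, S u.2) | u <- s].
Proof.
move=> cc Ex; apply: funext => phi; apply: funext => psi.
pose g a b := phi (S b) * psi (S a).
have gS : biscalar g by exact: biscalar_mulC (psi \o S) (phi \o S).
by rewrite Delta_antipode -[LHS]/(Dform g x) (DformE gS (cc _ _ Ex)) /tform /tsum !big_map.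
Qed.

End HopfCalculus.

(** * The h-inverse *)

Section Preimage.
Variables (K : fieldType) (A B : algType K) (HA : hopf A) (HB : hopf B).
Variable p : {linear A -> B}.
Hypothesis pm : hopf_morph HA HB p.
Local Notation pre := (hinv HA HB p).

Lemma morph1 : p 1 = 1. Proof. by case: pm. Qed.
Lemma morphM x y : p (x * y) = p x * p y. Proof. by case: pm. Qed.
Lemma morph_eps x : hEps HB (p x) = hEps HA x. Proof. by case: pm. Qed.

Lemma morph_Delta x : hDelta HB (p x) = tsum [seq (p u.1, p u.2) | u <- sweedler HA x].
Proof. by case: pm => _ _ _ ->; rewrite sweedlerP tmap_tsum. Qed.

(* [p o S] and [S o p] are both convolution inverses of [p]; the triple
   convolution [(p o S) * p * (S o p)] is computed in two ways. *)
Lemma morph_antipode x : p (hS HA x) = hS HB (p x).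
Proof.
apply: eq_by_scalars => phi.
pose tau a b c := phi (p (hS HA a) * (p b * hS HB (p c))).
have tauT : triscalar tau.
  split=> [c|a b].
    split=> [b|a]; first exact: linearP (phi \o ((p b * hS HB (p c)) \o* idfun) \o p \o hS HA).
    exact: linearP (phi \o (p (hS HA a) \*o idfun) \o (hS HB (p c) \o* idfun) \o p).
  exact: linearP (phi \o (p (hS HA a) \*o idfun) \o (p b \*o idfun) \o hS HB \o p).
transitivity (\sum_(u <- sweedler HA x) Dform HA (tau u.1) u.2).
  rewrite -{1}(counit_r (sweedlerP HA x)) !linear_sum; apply: eq_bigr => u _.
  have := antipode_r (morph_Delta u.2); rewrite big_map morph_eps /= => E.
  rewrite !linearZ /= /Dform /tform /tau -linear_sum -mulr_sumr E -scalerAr mulr1.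
  by rewrite linearZ.
rewrite -(coassoc_triscalar tauT (sweedlerP HA x)).
rewrite -[in RHS](counit_l (sweedlerP HA x)) !linear_sum; apply: eq_bigr => u _.
rewrite /Dform /tform /tau.
transitivity (phi (p (\sum_(w <- sweedler HA u.1) hS HA w.1 * w.2) * hS HB (p u.2))).
  by rewrite linear_sum mulr_suml linear_sum; apply: eq_bigr => w _; rewrite morphM mulrA.
by rewrite (antipode_l (sweedlerP HA u.1)) !linearZ /= morph1 -scalerAl mul1r !linearZ.
Qed.

Definition pcoact x : tens B A := tmap p idfun (hDelta HA x).

Lemma pcoactE x : pcoact x = tsum [seq (p u.1, u.2) | u <- sweedler HA x].
Proof. by rewrite /pcoact sweedlerP tmap_tsum. Qed.

Lemma pcoact_apply x phi psi : pcoact x phi psi = hDelta HA x (phi \o p) psi.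
Proof. by rewrite pcoactE sweedlerP /tsum big_map. Qed.

Lemma pcoact_scalar phi psi : scalar (fun x => pcoact x phi psi).
Proof. by move=> a x y; rewrite !pcoact_apply Delta_scalar. Qed.

Lemma hinv_pcoact C x s : pcoact x = tsum s ->
  (forall z, z \in s -> C (z.1 - hEps HB z.1 *: 1)) -> pre C x.
Proof.
move=> Es sC; exists [seq (z.1 - hEps HB z.1 *: 1, z.2) | z <- s]; split.
  move=> z /mapP [w /sC Cw ->]; split => //; split => //=.
  by rewrite linearB linearZ /= eps1 mulr1 subrr.
have eps_pcoact psi : pcoact x (hEps HB) psi = psi x.
  rewrite pcoactE /tsum big_map -[in RHS](counit_l (sweedlerP HA x)) linear_sum.
  by apply: eq_bigr => u _; rewrite linearZ morph_eps.
apply: funext => phi; apply: funext => psi.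
rewrite /tsub /pure /tsum big_map -/(pcoact x) -(eps_pcoact psi) Es /tsum mulr_sumr -sumrB.
by apply: eq_bigr => z _ /=; rewrite linearB linearZ /=; ring.
Qed.

Lemma pcoact_hinv C x : C 1 -> pre C x -> in_tens C setT (pcoact x).
Proof.
move=> C1 [s [sC Es]]; exists ((1, x) :: s); split.
  by move=> z; rewrite inE => /orP[/eqP -> //|/sC [[]]].
apply: funext => phi; apply: funext => psi.
have := congr1 (fun t => t phi psi) Es; rewrite /tsub /pure /tsum big_cons /= -/(pcoact x) => <-.
by rewrite addrCA subrr addr0.
Qed.

Lemma hinvE C : is_subspace C -> C 1 -> pre C = [set x | in_tens C setT (pcoact x)].
Proof.
move=> subC C1; apply/seteqP; split => x; first exact: pcoact_hinv.
move=> [s [sC Es]]; apply: (hinv_pcoact Es) => z /sC [Cz _].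
by apply: (subspaceB subC Cz); apply: subspaceZ.
Qed.

Lemma hinv_subspace C : hopf_sub HB C -> is_subspace (pre C).
Proof.
move=> [subC [C1 _] _ _]; rewrite hinvE //; split.
  exists [::]; split=> //; apply: funext => phi; apply: funext => psi.
  by rewrite /tsum big_nil (scalar0 (pcoact_scalar phi psi)).
move=> a x y [s [sC Es]] [r [rC Er]].
exists ([seq (a *: z.1, z.2) | z <- s] ++ r); split.
  move=> z; rewrite mem_cat => /orP[/mapP [w /sC [Cw _] ->]|/rC //].
  by split=> //; apply: subspaceZ.
apply: funext => phi; apply: funext => psi.
rewrite pcoact_scalar Es Er /tsum big_cat big_map mulr_sumr; congr (_ + _).
by apply: eq_bigr => z _; rewrite linearZ mulrA.
Qed.

Lemma hinv1 C : hopf_sub HB C -> pre C 1.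
Proof.
move=> [subC [C1 _] _ _]; rewrite hinvE //; exists [:: (1, 1)]; split.
  by move=> z; rewrite inE => /eqP ->.
by rewrite /pcoact Delta1 tmap_tsum /= morph1.
Qed.

Lemma hinvM C x y : hopf_sub HB C -> pre C x -> pre C y -> pre C (x * y).
Proof.
move=> [subC [C1 CM] _ _]; rewrite hinvE // => -[s [sC Es]] [r [rC Er]].
exists (tmul s r); split.
  move=> z /allpairsP [[u v] [/sC [Cu _] /rC [Cv _] ->]].
  by split=> //; apply: CM.
rewrite /pcoact (Delta_mul (sweedlerP HA x) (sweedlerP HA y)) tmap_tsum map_allpairs.
have Ex : tsum [seq (p u.1, u.2) | u <- sweedler HA x] = tsum s by rewrite -pcoactE.
have Ey : tsum [seq (p u.1, u.2) | u <- sweedler HA y] = tsum r by rewrite -pcoactE.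
rewrite -(tsum_tmul Ex Ey) /tmul allpairs_mapl allpairs_mapr.
by congr tsum; apply: eq_allpairs => u v /=; rewrite morphM.
Qed.


Lemma hinv_antipode C x : cocommutative HA -> hopf_sub HB C -> pre C x -> pre C (hS HA x).
Proof.
move=> cc [subC [C1 _] _ CS]; rewrite !hinvE // => -[s [sC Es]].
exists [seq (hS HB z.1, hS HA z.2) | z <- s]; split.
  by move=> z /mapP [w /sC [Cw _] ->]; split=> //; apply: CS.
have -> : pcoact (hS HA x) = tmap (hS HB) (hS HA) (pcoact x).
  rewrite /pcoact (Delta_antipode_cocomm cc (sweedlerP HA x)) sweedlerP !tmap_tsum -!map_comp.
  by congr tsum; apply: eq_map => u /=; rewrite morph_antipode.
by rewrite Es tmap_tsum.
Qed.

Lemma image_hinv_sub C : hopf_sub HB C -> p @` pre C `<=` C.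
Proof.
move=> [subC [C1 _] _ _] y [x]; rewrite hinvE // => -[s [sC Es]] <-.
have -> : p x = lslice s (hEps HA).
  apply: eq_by_scalars => phi; rewrite lsliceE -Es pcoactE /tsum big_map.
  rewrite -[in LHS](counit_r (sweedlerP HA x)) !linear_sum; apply: eq_bigr => u _.
  by rewrite !linearZ /= mulrC.
by apply: (subspace_sum subC) => z /sC [Cz _]; apply: subspaceZ.
Qed.

Lemma hinv_of_image C D : hopf_sub HA D -> p @` D `<=` C -> D `<=` pre C.
Proof.
move=> [subD [D1 _] DD _] pDC x /DD [s [sD Es]].
apply: (@hinv_pcoact _ _ [seq (p z.1, z.2) | z <- s]); first by rewrite /pcoact Es tmap_tsum.
move=> _ /mapP [z /sD [Dz _] ->] /=; rewrite morph_eps -[1 in X in _ *: X]morph1 -linearZ -linearB.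
by apply: pDC; exists (z.1 - hEps HA z.1 *: 1) => //; apply: (subspaceB subD Dz); apply: subspaceZ.
Qed.

Lemma hinv_lslice C x s chi : hopf_sub HB C -> pre C x -> hDelta HA x = tsum s ->
  pre C (lslice s chi).
Proof.
move=> hC; have [subC [C1 _] _ _] := hC; rewrite !hinvE // => -[r [rC Er]] Es.
exists [seq (z.1, lslice (sweedler HA z.2) chi) | z <- r]; split.
  by move=> _ /mapP [z /rC [Cz _] ->].
apply: funext => phi; apply: funext => psi.
pose G := Scalar (Delta_scalar HA psi chi).
transitivity (tsum r phi G); last first.
  by rewrite /tsum big_map; apply: eq_bigr => z _; rewrite /= lsliceE -sweedlerP.
rewrite -Er pcoact_apply /lslice Delta_sum.
under eq_bigr do rewrite DeltaZ mulrC.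
by rewrite (coassoc Es) pcoact_apply Es.
Qed.

Lemma hinv_Delta C x : cocommutative HA -> hopf_sub HB C -> pre C x ->
  in_tens (pre C) (pre C) (hDelta HA x).
Proof.
move=> cc hC Cx; have subpre := hinv_subspace hC.
rewrite sweedlerP; apply: in_tens_of_slices => // [chi|phi].
  exact: hinv_lslice hC Cx (sweedlerP HA x).
have -> : rslice (sweedler HA x) phi = lslice [seq (u.2, u.1) | u <- sweedler HA x] phi.
  by rewrite /lslice big_map.
exact: hinv_lslice hC Cx (cc _ _ (sweedlerP HA x)).
Qed.

Lemma hinv_hopf_sub C : cocommutative HA -> hopf_sub HB C -> hopf_sub HA (pre C).
Proof.
move=> cc hC; split; first exact: hinv_subspace.
- by split=> [|x y]; [exact: hinv1 | exact: hinvM].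
- by move=> x; exact: hinv_Delta.
- by move=> x; exact: hinv_antipode.
Qed.

End Preimage.

Theorem lemma2p5 (K : fieldType) (A B : algType K) (HA : hopf A) (HB : hopf B)
  (p : {linear A -> B}) :
  cocommutative HA -> cocommutative HB -> hopf_morph HA HB p ->
  [/\ (forall C : set B, hopf_sub HB C -> p @` hinv HA HB p C `<=` C),
      (forall D : set A, hopf_sub HA D -> D `<=` hinv HA HB p (p @` D)),
      (forall (C : set B) (D : set A), hopf_sub HB C -> hopf_sub HA D ->
          (D `<=` hinv HA HB p C <-> p @` D `<=` C)) &
      (forall C : set B, hopf_sub HB C ->
          (C = p @` hinv HA HB p C <-> exists D : set A, hopf_sub HA D /\ C = p @` D))].
Proof.
move=> ccA _ pm; have hinv_sub := image_hinv_sub pm.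
have sub_hinv D : hopf_sub HA D -> D `<=` hinv HA HB p (p @` D).
  by move=> hD; apply: hinv_of_image.
split=> // [C D hC hD|C hC].
  split=> [DC _ [x Dx <-]|]; last exact: hinv_of_image.
  by apply: hinv_sub => //; exists x => //; exact: DC.
split=> [E|[D [hD E]]]; first by exists (hinv HA HB p C); split=> //; exact: hinv_hopf_sub.
apply/seteqP; split; last exact: hinv_sub.
by rewrite E => _ [x Dx <-]; exists x => //; exact: sub_hinv.
Qed.
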